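(* Let $n\geq1$ and $\lambda=(\lambda_1,\dots,\lambda_n)\in\mathbb{R}^n$. Then $\sum_{P\in\mathcal{P}_{ord}(\lambda)}(-1)^{|P|}$ equals $(-1)^n$ if $\lambda_r>0$ for all $r\in\{1,\dots,n\}$, and $0$ otherwise.
   Context: An ordered partition of $\{1,\dots,n\}$ is a sequence $P=(I_1,\dots,I_k)$ of nonempty pairwise disjoint subsets with union $\{1,\dots,n\}$, and $|P|=k$. For $J\subset\{1,\dots,n\}$, $s_J(\lambda)=\sum_{i\in J}\lambda_i$. $\mathcal{P}_{ord}(\lambda)$ is the set of ordered partitions $P=(I_1,\dots,I_k)$ such that $s_{I_1}(\lambda)+\dots+s_{I_i}(\lambda)>0$ for all $i\in\{1,\dots,k\}$. *)

From mathcomp Require Import all_boot all_order all_algebra.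
Set Implicit Arguments. Unset Strict Implicit. Unset Printing Implicit Defensive.
Import Order.TTheory GRing.Theory Num.Theory.
Local Open Scope ring_scope.

(* An ordered partition of {1..n} (here 'I_n) with k blocks is represented as a
   finite function P : 'I_k -> {set 'I_n}, P = (I_1,...,I_k). *)
Definition is_ord_partition (n k : nat) (P : {ffun 'I_k -> {set 'I_n}}) : bool :=
  [forall i, P i != set0]
  && [forall i, forall j, (i != j) ==> [disjoint P i & P j]]
  && (\bigcup_(i < k) P i == [set: 'I_n]).

Definition sJ (R : numDomainType) (n : nat) (lam : 'I_n -> R) (J : {set 'I_n}) : R :=
  \sum_(r in J) lam r.

Definition in_Pord (R : numDomainType) (n k : nat) (lam : 'I_n -> R)
  (P : {ffun 'I_k -> {set 'I_n}}) : bool :=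
  is_ord_partition P &&
  [forall i : 'I_k, 0 < \sum_(j : 'I_k | (j <= i)%N) sJ lam (P j)].

(* sum_{P in P_ord(lambda)} (-1)^{|P|}; an ordered partition of an n-set has
   between 1 and n blocks (k = 0 gives no partition when n >= 1). *)
Definition Pord_signed_count (R : numDomainType) (n : nat) (lam : 'I_n -> R) : int :=
  \sum_(k < n.+1) \sum_(P : {ffun 'I_k -> {set 'I_n}} | in_Pord lam P) (-1) ^+ k.

From mathcomp Require Import all_boot all_order all_algebra reals.
Import Order.TTheory GRing.Theory Num.Theory.
Set Implicit Arguments. Unset Strict Implicit. Unset Printing Implicit Defensive.
Local Open Scope ring_scope.

(* Removing the last block J of an ordered partition of S with positive prefix
   sums leaves such a partition of S \ J; conversely, appending a nonempty
   block J to such a partition of S \ J yields one of S exactly when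
   s_S(lambda) > 0, the only new prefix sum being the total.  Hence the signed
   count H(S) satisfies H(∅) = 1 and
     H(S) = - [s_S(lambda) > 0] * \sum_(∅ <> J ⊆ S) H(S \ J).
   By induction on |S|, H(S) = (-1)^|S| if lambda is positive on S and 0
   otherwise: the sum over J is the alternating sum over the subsets of
   S ∩ {lambda > 0} minus the term for S itself, and that alternating sum
   vanishes unless S ∩ {lambda > 0} = ∅, in which case s_S(lambda) <= 0. *)

Section SubsetSums.
Variable T : finType.
Implicit Types A B C J S U : {set T}.

Lemma sum_subset_sign A :
  \sum_(B : {set T} | B \subset A) (-1) ^+ #|B| = (A == set0)%:R :> int.
Proof.
have [->|/set0Pn[a aA]] := eqVneq A set0.
  by rewrite (big_pred1 set0) ?cards0 // => B; rewrite subset0.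
rewrite (bigID (fun B : {set T} => a \in B)) /=; apply/eqP; rewrite addr_eq0; apply/eqP.
rewrite (reindex_onto (fun B : {set T} => a |: B) (fun B : {set T} => B :\ a)) /=;
  last first.
  by move=> B /andP[_ aB]; rewrite setD1K.
rewrite -sumrN; apply: eq_big => B.
  rewrite setU11 andbT subUset sub1set aA /=.
  congr (_ && _); apply/eqP/idP => [<-|]; first by rewrite !inE eqxx.
  exact: setU1K.
move=> /andP[_ /eqP <-].
by rewrite cardsU1 !inE eqxx exprD expr1 mulN1r.
Qed.

Lemma sum_subset_sign_within A C :
  \sum_(B : {set T} | B \subset A) (B \subset C)%:R * (-1) ^+ #|B|
    = (A :&: C == set0)%:R :> int.
Proof.
rewrite -sum_subset_sign (eq_bigl _ _ (fun B => subsetI B A C)) big_mkcondr /=.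
by apply: eq_bigr => B _; case: (B \subset C); rewrite ?mul1r ?mul0r.
Qed.

Lemma sum_subset_setD (V : nmodType) A (F : {set T} -> V) :
  \sum_(B : {set T} | B \subset A) F (A :\: B) = \sum_(B : {set T} | B \subset A) F B.
Proof.
have setDK B : B \subset A -> A :\: (A :\: B) = B.
  by move=> sBA; rewrite setDDr setDv set0U; apply/setIidPr.
rewrite [RHS](reindex_onto (fun B : {set T} => A :\: B) (fun B : {set T} => A :\: B)) /=;
  last exact: setDK.
apply: eq_bigl => B; rewrite subsetDl /=.
by apply/idP/eqP => [/setDK|<-] //; rewrite subsetDl.
Qed.

Lemma disjointU_eq U J S :
  [disjoint U & J] && (U :|: J == S) = (J \subset S) && (U == S :\: J).
Proof.
apply/andP/andP => [[dUJ /eqP <-]|[sJS /eqP ->]].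
  by rewrite subsetUr setDUl setDv setU0 (setDidPl dUJ).
split; first by rewrite -setI_eq0 setDE -setIA [~: J :&: J]setIC setICr setI0.
by rewrite setUC -{2}(setID S J) (setIidPr sJS).
Qed.

Lemma card_setD_lt J S : J != set0 -> J \subset S -> (#|S :\: J| < #|S|)%N.
Proof.
rewrite -card_gt0 => J_gt0 sJS.
by rewrite cardsDS // ltn_subrL J_gt0 (leq_trans J_gt0 (subset_leq_card sJS)).
Qed.

End SubsetSums.

Lemma forall_ordS k (p : pred 'I_k.+1) :
  [forall i, p i] = [forall j : 'I_k, p (lift ord_max j)] && p ord_max.
Proof.
apply/forallP/andP => [p_all|[/forallP p_lift p_max] i].
  by split; [apply/forallP => j|]; apply: p_all.
by case: (unliftP ord_max i) => [j ->|->].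
Qed.

Section RconsFfun.
Variable T : Type.

Definition rcons_ffun k (Q : {ffun 'I_k -> T}) (x : T) : {ffun 'I_k.+1 -> T} :=
  [ffun i => if unlift ord_max i is Some j then Q j else x].

Lemma rcons_ffun_lift k Q x (j : 'I_k) : rcons_ffun Q x (lift ord_max j) = Q j.
Proof. by rewrite ffunE liftK. Qed.

Lemma rcons_ffun_max k Q x : rcons_ffun (k := k) Q x ord_max = x.
Proof. by rewrite ffunE unlift_none. Qed.

Lemma rcons_ffun_widen k Q x (j : 'I_k) :
  rcons_ffun Q x (widen_ord (leqnSn k) j) = Q j.
Proof.
suff -> : widen_ord (leqnSn k) j = lift ord_max j by rewrite rcons_ffun_lift.
by apply: val_inj; exact: esym (lift_max j).
Qed.

Lemma rcons_ffun_bij k :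
  bijective (fun Qx : {ffun 'I_k -> T} * T => rcons_ffun Qx.1 Qx.2).
Proof.
exists (fun P : {ffun 'I_k.+1 -> T} => ([ffun j => P (lift ord_max j)], P ord_max)).
  move=> [Q x] /=; rewrite rcons_ffun_max; congr pair.
  by apply/ffunP => j; rewrite ffunE rcons_ffun_lift.
move=> P; apply/ffunP => i; rewrite ffunE.
by case: unliftP => [j ->|->] /=; rewrite ?ffunE.
Qed.

Lemma forall_rcons_ffun k (p : pred T) Q x :
  [forall i, p (@rcons_ffun k Q x i)] = [forall j, p (Q j)] && p x.
Proof.
rewrite forall_ordS rcons_ffun_max; congr (_ && _).
by apply: eq_forallb => j; rewrite rcons_ffun_lift.
Qed.

End RconsFfun.

Section OrderedPartitions.
Variable T : finType.
Implicit Types S J : {set T}.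

Definition pairwise_disjoint k (P : {ffun 'I_k -> {set T}}) : bool :=
  [forall i, forall j, (i != j) ==> [disjoint P i & P j]].

(* For S = [set: T] this unfolds to [is_ord_partition]. *)
Definition ord_partition_of k S (P : {ffun 'I_k -> {set T}}) : bool :=
  [forall i, P i != set0] && pairwise_disjoint P && (\bigcup_(i < k) P i == S).

Lemma pairwise_disjoint_rcons k Q J :
  pairwise_disjoint (@rcons_ffun _ k Q J) =
    pairwise_disjoint Q && [disjoint \bigcup_(j < k) Q j & J].
Proof.
apply/forallP/andP => [dP|[/forallP dQ]]; last first.
  rewrite disjoint_sym => /bigcup_disjointP dQJ i.
  apply/forallP => i'; apply/implyP.
  case: (unliftP ord_max i) => [j ->|->]; case: (unliftP ord_max i') => [j' ->|->];
    rewrite ?rcons_ffun_lift ?rcons_ffun_max ?eqxx //.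
  - by rewrite (inj_eq lift_inj); apply/implyP; apply: (forallP (dQ j)).
  - by move=> _; rewrite disjoint_sym dQJ.
  - by move=> _; apply: dQJ.
split.
  apply/forallP => i; apply/forallP => j; apply/implyP => ij.
  have /forallP/(_ (lift ord_max j)) := dP (lift ord_max i).
  by rewrite !rcons_ffun_lift (inj_eq lift_inj) ij.
rewrite disjoint_sym; apply/bigcup_disjointP => j _.
have /forallP/(_ (lift ord_max j)) := dP ord_max.
by rewrite rcons_ffun_max rcons_ffun_lift neq_lift.
Qed.

Lemma bigcup_rcons_ffun k Q J :
  \bigcup_(i < k.+1) rcons_ffun Q J i = (\bigcup_(j < k) Q j) :|: J.
Proof.
rewrite big_ord_recr rcons_ffun_max; congr (_ :|: _).
by apply: eq_bigr => j _; rewrite rcons_ffun_widen.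
Qed.

Lemma ord_partition_rcons k S Q J :
  ord_partition_of S (@rcons_ffun _ k Q J) =
    [&& J != set0, J \subset S & ord_partition_of (S :\: J) Q].
Proof.
rewrite /ord_partition_of (forall_rcons_ffun (fun A => A != set0)).
rewrite pairwise_disjoint_rcons bigcup_rcons_ffun.
rewrite -andbA -[_ && (_ == S)]andbA disjointU_eq.
by case: [forall _, _]; case: (J != set0); case: pairwise_disjoint; rewrite //= ?andbF.
Qed.

End OrderedPartitions.

Section SignedCount.
Variables (R : realDomainType) (n : nat) (lam : 'I_n -> R).
Implicit Types S J : {set 'I_n}.

Definition pos_prefix_sums k (P : {ffun 'I_k -> {set 'I_n}}) : bool :=
  [forall i : 'I_k, 0 < \sum_(j : 'I_k | (j <= i)%N) sJ lam (P j)].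

Lemma pos_prefix_sums_rcons k Q J :
  pos_prefix_sums (@rcons_ffun _ k Q J) =
    pos_prefix_sums Q && (0 < \sum_(i < k.+1) sJ lam (rcons_ffun Q J i)).
Proof.
rewrite /pos_prefix_sums forall_ordS; congr (_ && _); last first.
  by rewrite (eq_bigl xpredT) // => i; rewrite /= leq_ord.
apply: eq_forallb => i; rewrite big_mkcond big_ord_recr /= [in RHS]big_mkcond.
have -> : bump k i = i by rewrite /bump leqNgt ltn_ord.
rewrite leqNgt ltn_ord addr0.
by congr (0 < _); apply: eq_bigr => j _; rewrite rcons_ffun_widen.
Qed.

Lemma sum_sJ_ord_partition k S (P : {ffun 'I_k -> {set 'I_n}}) :
  ord_partition_of S P -> \sum_(i < k) sJ lam (P i) = sJ lam S.
Proof.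
move=> /andP[/andP[_ /forallP dP] /eqP <-].
rewrite /sJ partition_disjoint_bigcup // => i j.
by apply/implyP; exact: (forallP (dP i)).
Qed.

Lemma ord_partition_pos_rcons k S Q J :
  ord_partition_of S (@rcons_ffun _ k Q J) && pos_prefix_sums (rcons_ffun Q J) =
    [&& J != set0, J \subset S, 0 < sJ lam S
      & ord_partition_of (S :\: J) Q && pos_prefix_sums Q].
Proof.
rewrite pos_prefix_sums_rcons.
have [partP|] := boolP (ord_partition_of S _).
  rewrite (sum_sJ_ord_partition partP) /=.
  by move: partP; rewrite ord_partition_rcons => /and3P[-> -> ->] /=; exact: andbC.
rewrite ord_partition_rcons => /negbTE.
by case: (J != set0) (J \subset S) => [] [] //= ->; rewrite andbF.
Qed.

Definition positive_coords : {set 'I_n} := [set r | 0 < lam r].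

Lemma sJ_gt0 S : S != set0 -> S \subset positive_coords -> 0 < sJ lam S.
Proof.
move=> /set0Pn[r rS] /subsetP S_pos.
have lam_gt0 s : s \in S -> 0 < lam s by move=> /S_pos; rewrite inE.
rewrite /sJ (bigD1 r) //= ltr_pwDl ?lam_gt0 //.
by apply: sumr_ge0 => s /andP[sS _]; exact/ltW/lam_gt0.
Qed.

Lemma sJ_le0 S : [disjoint S & positive_coords] -> sJ lam S <= 0.
Proof.
move=> dS; apply: sumr_le0 => r rS; rewrite leNgt.
by apply: contraL rS => r_pos; rewrite (disjointFl dS) // inE.
Qed.

Definition signed_count_blocks k S : int :=
  \sum_(P : {ffun 'I_k -> {set 'I_n}} | ord_partition_of S P && pos_prefix_sums P)
    (-1) ^+ k.

Definition signed_count S : int := \sum_(k < n.+1) signed_count_blocks k S.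

Lemma signed_count_blocks0 S : signed_count_blocks 0 S = (S == set0)%:R.
Proof.
rewrite /signed_count_blocks (eq_bigl (fun=> S == set0)) => [|P]; last first.
  rewrite /ord_partition_of /pairwise_disjoint /pos_prefix_sums big_ord0 eq_sym.
  have allT : [forall i : 'I_0, predT i] by apply/forallP.
  by rewrite !(@eq_forallb _ _ predT) ?allT ?andbT // => -[].
have [_|_] := eqVneq S set0; last by rewrite big_pred0.
rewrite (big_pred1 [ffun=> set0]) // => P /=.
by symmetry; apply/eqP/ffunP => -[].
Qed.

Lemma signed_count_blocksS k S :
  signed_count_blocks k.+1 S =
    - (0 < sJ lam S)%R%:R *
      \sum_(J : {set 'I_n} | (J \subset S) && (J != set0))
        signed_count_blocks k (S :\: J).
Proof.
rewrite /signed_count_blocks (reindex _ (onW_bij _ (rcons_ffun_bij _ _))) /=.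
transitivity (\sum_(J : {set 'I_n}) \sum_(Q : {ffun 'I_k -> {set 'I_n}})
  if [&& J != set0, J \subset S, 0 < sJ lam S
        & ord_partition_of (S :\: J) Q && pos_prefix_sums Q]
  then (-1) ^+ k.+1 else 0 : int).
  rewrite exchange_big pair_big big_mkcond.
  by apply: eq_bigr => -[Q J] _; rewrite ord_partition_pos_rcons.
rewrite mulr_sumr [RHS]big_mkcond; apply: eq_bigr => J _ /=.
have [sJS|_] := boolP (J \subset S); last by rewrite big1 // => Q _; rewrite andbF.
have [J0|_] := boolP (J != set0); last by rewrite big1.
have [S_pos|_] := boolP (0 < sJ lam S); last by rewrite big1 // mul0r.
rewrite mulN1r -sumrN [RHS]big_mkcond; apply: eq_bigr => Q _ /=.
by case: ifP; rewrite ?oppr0 // exprS mulN1r.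
Qed.

Lemma signed_count_blocks_gt k S : (#|S| < k)%N -> signed_count_blocks k S = 0.
Proof.
elim: k S => [//|k IHk] S ltSk.
rewrite signed_count_blocksS big1 ?mulr0 // => J /andP[sJS J0].
by apply: IHk; exact: leq_trans (card_setD_lt J0 sJS) ltSk.
Qed.

Lemma signed_countE S :
  signed_count S =
    (S == set0)%:R - (0 < sJ lam S)%R%:R *
      \sum_(J : {set 'I_n} | (J \subset S) && (J != set0)) signed_count (S :\: J).
Proof.
rewrite /signed_count big_ord_recl signed_count_blocks0.
under eq_bigr do rewrite lift0 signed_count_blocksS mulNr.
rewrite sumrN -mulr_sumr exchange_big /=; congr (_ - _ * _).
apply: eq_bigr => J /andP[sJS J0]; rewrite big_ord_recr /=.
rewrite signed_count_blocks_gt ?addr0 //.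
by rewrite (leq_trans (card_setD_lt J0 sJS)) // -[n in (_ <= n)%N]card_ord max_card.
Qed.

Lemma signed_count_sign S :
  signed_count S = (S \subset positive_coords)%:R * (-1) ^+ #|S|.
Proof.
have [m] := ubnP #|S|; elim: m S => // m IHm S ltSm.
have sum_proper :
    \sum_(J : {set 'I_n} | (J \subset S) && (J != set0)) signed_count (S :\: J)
      = (S :&: positive_coords == set0)%:R
        - (S \subset positive_coords)%:R * (-1) ^+ #|S|.
  rewrite -(sum_subset_sign_within S positive_coords) -sum_subset_setD.
  rewrite [in RHS](bigD1 set0) ?sub0set //= setD0 [_ * _ + _]addrC addrK.
  apply: eq_bigr => J /andP[sJS J0]; apply: IHm.
  by rewrite (leq_trans (card_setD_lt J0 sJS)).
rewrite signed_countE sum_proper.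
have [-> | S0] := eqVneq S set0.
  by rewrite /sJ big_set0 ltxx sub0set cards0 /= !(mulr0n, mulr1n, mul0r, subr0).
have [S_pos | _] := boolP (S \subset positive_coords).
  rewrite sJ_gt0 // (setIidPl S_pos) (negPf S0) /=.
  by rewrite !(mulr0n, mulr1n, mul1r, sub0r, opprK).
have [SP0 | _] := boolP (S :&: positive_coords == set0).
  by rewrite ltNge sJ_le0 -?setI_eq0 //= !(mulr0n, mul0r, subr0).
by rewrite !(mulr0n, mul0r, subr0, mulr0).
Qed.

End SignedCount.

Theorem mainTheorem5 (R : realType) (n : nat) (hn : (1 <= n)%N) (lam : 'I_n -> R) :
  Pord_signed_count lam =
    (if [forall r, 0 < lam r] then (-1) ^+ n else 0).
Proof.
have -> : Pord_signed_count lam = signed_count lam [set: 'I_n] by [].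
rewrite signed_count_sign cardsT card_ord.
have -> : [set: 'I_n] \subset positive_coords lam = [forall r, 0 < lam r].
  by apply/subsetP/forallP => pos r => [|_]; [have := pos r (in_setT r) |]; rewrite inE.
by case: [forall r, _]; rewrite ?mul1r ?mul0r.
Qed.
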